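(* Work in the semifield $\mathbb{R}_{\max,+}$. Let $\bm{r}_1,\ldots,\bm{r}_m\in\mathbb{R}^{n}$ and $w_1,\ldots,w_m\in\mathbb{R}$, let $\bm{p}=w_1\bm{r}_1\oplus\cdots\oplus w_m\bm{r}_m$ and $\bm{q}^{-}=w_1\bm{r}_1^{-}\oplus\cdots\oplus w_m\bm{r}_m^{-}$, and let $\varphi(\bm{x})=\bm{x}^{-}\bm{p}\oplus\bm{q}^{-}\bm{x}$ (which equals $\max_{i}(\rho(\bm{r}_i,\bm{x})+w_i)$ with $\rho$ the Chebyshev distance). Let $A=(a_{ij})\in\mathbb{R}_{\max,+}^{n\times n}$ be an irreducible matrix with $\mathrm{Tr}(A)=\mathbb{1}$, let $S_0=\{\bm{x}\in\mathbb{R}^n\mid A\bm{x}=\bm{x}\}$ (i.e. $\max_{j}(a_{ij}+x_j)=x_i$ for all $i$), and put $$\Delta=\sqrt{(A^{+}(\bm{q}^{-}A^{+})^{-})^{-}\bm{p}}.$$ Then $\min_{\bm{x}\in S_0}\varphi(\bm{x})=\Delta$, and the minimum is attained at $\bm{x}=\Delta A^{+}(\bm{q}^{-}A^{+})^{-}$.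
   Context: $\mathbb{R}_{\max,+}=(\mathbb{R}\cup\{-\infty\},-\infty,0,\max,+)$: $x\oplus y=\max(x,y)$, $x\otimes y=x+y$ (sign omitted), zero $\mathbb{0}=-\infty$, identity $\mathbb{1}=0$, $x^{-1}=-x$, $\sqrt{x}=x/2$. Matrix and vector operations are the usual ones with $\max$ in place of sum and $+$ in place of product. For a nonzero column (or row) vector $\bm{x}=(x_j)$, the pseudo-inverse $\bm{x}^{-}$ is the row (resp. column) vector with entries $-x_j$ if $x_j\ne-\infty$ and $-\infty$ otherwise; $\bm{q}$ is the column vector with $\bm{q}^{-}$ as its pseudo-inverse. $I$ is the identity matrix (0 on diagonal, $-\infty$ elsewhere), $A^0=I$, $A^{k}=A^{k-1}A$. A square matrix is irreducible if it cannot be brought to block-triangular form by simultaneous permutation of rows and columns. $\mathrm{tr}A=\bigoplus_i a_{ii}$ and $\mathrm{Tr}(A)=\bigoplus_{k=1}^{n}\mathrm{tr}A^{k}$. Let $A^{\ast}=I\oplus A\oplus\cdots\oplus A^{n-1}$ and $A^{\times}=AA^{\ast}$. The matrix $A^{+}$ is formed as follows: for each column $\bm{a}^{\times}_i$ of $A^{\times}$, keep it if its diagonal entry $a^{\times}_{ii}$ equals $\mathbb{1}$ and replace it by the zero vector otherwise; then remove the columns (including zero ones) that are linearly dependent on the others (a vector $\bm{y}$ is linearly dependent on $\bm{x}_1,\ldots,\bm{x}_k$ if $\bm{y}=c_1\bm{x}_1\oplus\cdots\oplus c_k\bm{x}_k$ for some scalars $c_i$); the remaining columns form $A^{+}$.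 *)

(* Max-plus semifield R_{max,+} over an ordered field R,
   represented as [option R] with [None] = -oo (the zero of the semifield). *)
From mathcomp Require Import all_boot all_order all_algebra all_fingroup.
Set Implicit Arguments. Unset Strict Implicit. Unset Printing Implicit Defensive.
Import Order.TTheory GRing.Theory Num.Theory.
Local Open Scope ring_scope.

Section MaxPlus.
Variable R : realFieldType.

Definition mpadd (a b : option R) : option R :=
  match a, b with
  | None, _ => b
  | _, None => a
  | Some x, Some y => Some (Num.max x y)
  end.

Definition mpmul (a b : option R) : option R :=
  match a, b with
  | Some x, Some y => Some (x + y)
  | _, _ => None
  end.

Definition mpneg (a : option R) : option R := option_map (fun x => - x) a.

Definition mpsqrt (a : option R) : option R := option_map (fun x => x / 2) a.

Definition mple (a b : option R) : bool :=
  match a, b with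
  | None, _ => true
  | Some _, None => false
  | Some x, Some y => x <= y
  end.

Definition mpzero {m n : nat} : 'M[option R]_(m, n) := const_mx None.

Definition mpmx_add {m n : nat} (A B : 'M[option R]_(m, n)) : 'M[option R]_(m, n) :=
  \matrix_(i, j) mpadd (A i j) (B i j).

Definition mpmx_mul {m n p : nat} (A : 'M[option R]_(m, n)) (B : 'M[option R]_(n, p))
  : 'M[option R]_(m, p) :=
  \matrix_(i, k) \big[mpadd/None]_(j < n) mpmul (A i j) (B j k).

Definition mpmx_scale {m n : nat} (c : option R) (A : 'M[option R]_(m, n)) : 'M[option R]_(m, n) :=
  \matrix_(i, j) mpmul c (A i j).

Definition mpmx_pinv {m n : nat} (A : 'M[option R]_(m, n)) : 'M[option R]_(n, m) :=
  \matrix_(i, j) mpneg (A j i).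

Definition mp1 (n : nat) : 'M[option R]_n :=
  \matrix_(i, j) if i == j then Some 0 else None.

Fixpoint mpmx_pow {n : nat} (A : 'M[option R]_n) (k : nat) : 'M[option R]_n :=
  match k with
  | 0 => mp1 n
  | k'.+1 => mpmx_mul (mpmx_pow A k') A
  end.

Definition mpstar {n : nat} (A : 'M[option R]_n) : 'M[option R]_n :=
  \big[mpmx_add/mpzero]_(k < n) mpmx_pow A k.

Definition mptimes {n : nat} (A : 'M[option R]_n) : 'M[option R]_n :=
  mpmx_mul A (mpstar A).

Definition mptr {n : nat} (A : 'M[option R]_n) : option R :=
  \big[mpadd/None]_(i < n) A i i.

Definition mpTr {n : nat} (A : 'M[option R]_n) : option R :=
  \big[mpadd/None]_(1 <= k < n.+1) mptr (mpmx_pow A k).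

Definition mp_irreducible {n : nat} (A : 'M[option R]_n) : Prop :=
  ~ exists (s : 'S_n) (k : nat),
      (0 < k < n)%N /\
      forall i j : 'I_n, (k <= i)%N -> (j < k)%N -> A (s i) (s j) = None.

Definition mp_comb {n k : nat} (y : 'cV[option R]_n) (X : 'I_k -> 'cV[option R]_n)
  (P : pred 'I_k) : Prop :=
  exists c : 'I_k -> option R,
    y = \big[mpmx_add/mpzero]_(i < k | P i) mpmx_scale (c i) (X i).

Definition mp_Aplus_pre {n : nat} (A : 'M[option R]_n) : 'M[option R]_n :=
  \matrix_(i, j) if mptimes A j j == Some 0 then mptimes A i j else None.

(* B is (a choice of) A^+: obtained from mp_Aplus_pre A by removing columns
   (including zero ones) linearly dependent on the others, until none is;
   i.e. B consists of a subfamily of the columns of mp_Aplus_pre A (in their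
   original order) spanning all of them, none of which is linearly dependent
   on the other columns of B. *)
Definition is_Aplus {n k : nat} (A : 'M[option R]_n) (B : 'M[option R]_(n, k)) : Prop :=
  exists f : 'I_k -> 'I_n,
    (forall i j : 'I_k, (i < j)%N -> (f i < f j)%N) /\
    (forall j : 'I_k, col j B = col (f j) (mp_Aplus_pre A)) /\
    (forall j : 'I_n, mp_comb (col j (mp_Aplus_pre A)) (fun i => col i B) predT) /\
    (forall j : 'I_k, ~ mp_comb (col j B) (fun i => col i B) (fun i => i != j)).

Definition mplift {n : nat} (x : 'cV[R]_n) : 'cV[option R]_n := map_mx Some x.

Definition mp_p {m n : nat} (r : 'I_m -> 'cV[R]_n) (w : 'I_m -> R) : 'cV[option R]_n :=
  \big[mpmx_add/mpzero]_(i < m) mpmx_scale (Some (w i)) (mplift (r i)).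

Definition mp_qm {m n : nat} (r : 'I_m -> 'cV[R]_n) (w : 'I_m -> R) : 'rV[option R]_n :=
  \big[mpmx_add/mpzero]_(i < m) mpmx_scale (Some (w i)) (mpmx_pinv (mplift (r i))).

Definition mp_phi {m n : nat} (r : 'I_m -> 'cV[R]_n) (w : 'I_m -> R)
  (x : 'cV[option R]_n) : option R :=
  (mpmx_add (mpmx_mul (mpmx_pinv x) (mp_p r w)) (mpmx_mul (mp_qm r w) x)) 0 0.

Definition mp_S0 {n : nat} (A : 'M[option R]_n) (x : 'cV[R]_n) : Prop :=
  mpmx_mul A (mplift x) = mplift x.

Definition mp_v {m n k : nat} (r : 'I_m -> 'cV[R]_n) (w : 'I_m -> R)
  (B : 'M[option R]_(n, k)) : 'cV[option R]_n :=
  mpmx_mul B (mpmx_pinv (mpmx_mul (mp_qm r w) B)).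

Definition mp_Delta {m n k : nat} (r : 'I_m -> 'cV[R]_n) (w : 'I_m -> R)
  (B : 'M[option R]_(n, k)) : option R :=
  mpsqrt ((mpmx_mul (mpmx_pinv (mp_v r w B)) (mp_p r w)) 0 0).

End MaxPlus.

From mathcomp Require Import all_boot all_order all_algebra all_fingroup.
From HB Require Import structures.
From mathcomp Require Import zify lra.
Import Order.TTheory GRing.Theory Num.Theory.
Local Open Scope ring_scope.
Set Implicit Arguments. Unset Strict Implicit. Unset Printing Implicit Defensive.

(* Read A as a weighted digraph: (A^k)_ij is the maximal weight of a walk of
   length k from i to j, and Tr A = 1 says that no cycle has positive weight,
   so A^x bounds the weight of every nonempty walk.  Hence each column of A^x
   with diagonal entry 1 (a critical column) is an eigenvector of A, and
   irreducibility makes it finite.  Following in each row of A x = x an entry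
   where the maximum is attained, one reaches a cycle of weight 1, which shows
   that for x in S_0 every x_i is attained by a multiple of a critical column
   lying below x.  Writing these columns as combinations of the columns of A^+
   and setting mu = q^- x, every multiple t A^+_l below x satisfies
   t (q^- A^+)_l <= mu, whence x <= mu v for v = A^+ (q^- A^+)^-.  Then
   x^- p >= mu^-1 v^- p = mu^-1 Delta^2, so phi(x) >= max(mu^-1 Delta^2, mu)
   >= Delta.  Conversely Delta v is a combination of eigenvectors, hence in S_0,
   and q^- v = (q^- A^+)(q^- A^+)^- = 1 gives phi(Delta v) = Delta. *)

Section MaxPlusScalar.
Variable R : realFieldType.
Implicit Types a b c d u : option R.

Lemma mple_refl a : mple a a.
Proof. by case: a => //= x. Qed.

Lemma mple_trans a b c : mple a b -> mple b c -> mple a c.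
Proof. by case: a; case: b; case: c => //= x y z; apply: le_trans. Qed.

Lemma mple_anti a b : mple a b -> mple b a -> a = b.
Proof. by case: a; case: b => //= x y h1 h2; congr Some; apply/le_anti; rewrite h1 h2. Qed.

Lemma mple_neqNone a b : mple a b -> a != None -> b != None.
Proof. by case: a; case: b. Qed.

Lemma mpaddA : associative (@mpadd R).
Proof. by case=> [x|]; case=> [y|]; case=> [z|] //=; rewrite maxA. Qed.

Lemma mpaddC : commutative (@mpadd R).
Proof. by case=> [x|]; case=> [y|] //=; rewrite maxC. Qed.

Lemma mpadd0l : left_id None (@mpadd R).
Proof. by case. Qed.

Lemma mple_addl a b : mple a (mpadd a b).
Proof. by case: a; case: b => //= x y; rewrite le_max lexx. Qed.

Lemma mple_addr a b : mple b (mpadd a b).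
Proof. by case: a; case: b => //= x y; rewrite le_max lexx orbT. Qed.

Lemma mpadd_mple a b c : mple a c -> mple b c -> mple (mpadd a b) c.
Proof. by case: a; case: b; case: c => //= x y z h1 h2; rewrite ge_max h1 h2. Qed.

Lemma mple_add2r a b c : mple a b -> mple (mpadd a c) (mpadd b c).
Proof.
move=> le_ab; apply: mpadd_mple (mple_addr _ _).
exact: mple_trans le_ab (mple_addl _ _).
Qed.

Lemma mpadd_eq_or a b : mpadd a b = a \/ mpadd a b = b.
Proof.
case: a; case: b => /=; try by [left|right].
by move=> x y; rewrite /Num.max; case: ifP; [right|left].
Qed.

Lemma mpmulA : associative (@mpmul R).
Proof. by case=> [x|]; case=> [y|]; case=> [z|] //=; rewrite addrA. Qed.

Lemma mpmulC : commutative (@mpmul R).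
Proof. by case=> [x|]; case=> [y|] //=; rewrite addrC. Qed.

Lemma mpmulCA a b c : mpmul a (mpmul b c) = mpmul b (mpmul a c).
Proof. by rewrite !mpmulA (mpmulC a). Qed.

Lemma mpmul1l a : mpmul (Some 0) a = a.
Proof. by case: a => //= x; rewrite add0r. Qed.

Lemma mpmul1r a : mpmul a (Some 0) = a.
Proof. by case: a => //= x; rewrite addr0. Qed.

Lemma mpmul0r a : mpmul a None = None.
Proof. by case: a. Qed.

Lemma mpmulDr a b c : mpmul a (mpadd b c) = mpadd (mpmul a b) (mpmul a c).
Proof.
case: a; case: b; case: c => //= x y z.
by congr Some; rewrite /Num.max ltrD2l; case: ifP.
Qed.

Lemma mple_mul2r a b c : mple a b -> mple (mpmul a c) (mpmul b c).
Proof. by case: a; case: b; case: c => //= x y z h; rewrite lerD2r. Qed.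

Lemma mple_mul2l a b c : mple a b -> mple (mpmul c a) (mpmul c b).
Proof. by rewrite !(mpmulC c); apply: mple_mul2r. Qed.

Lemma mpmul_neqNone a b : a != None -> b != None -> mpmul a b != None.
Proof. by case: a; case: b. Qed.

Lemma mpmul_neqNone_inv a b : mpmul a b != None -> a != None /\ b != None.
Proof. by case: a; case: b. Qed.

Lemma mpneg_mul a b : mpneg (mpmul a b) = mpmul (mpneg a) (mpneg b).
Proof. by case: a; case: b => //= x y; rewrite opprD. Qed.

Lemma mple_mpneg a b : a != None -> mple a b -> mple (mpneg b) (mpneg a).
Proof. by case: a; case: b => //= x y _; rewrite lerN2. Qed.

Lemma mple_mul_mpneg a b c : b != None ->
  mple (mpmul a b) c -> mple a (mpmul c (mpneg b)).
Proof. by case: a; case: b; case: c => //= x y z _ h; lra. Qed.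

Lemma mpsqrt_le_mpadd d u : u != None ->
  mple (mpsqrt d) (mpadd (mpmul (mpneg u) d) u).
Proof.
case: d => [x|] //; case: u => [y|] // _ /=.
by rewrite le_max; apply/orP; case: (lerP (x / 2) y) => h; [right|left; lra].
Qed.

Lemma mpadd_mpsqrt d : mpadd (mpmul (mpneg (mpsqrt d)) d) (mpsqrt d) = mpsqrt d.
Proof.
case: d => //= x.
have -> : - (x / 2) + x = x / 2 by lra.
by rewrite maxxx.
Qed.

Lemma mple_big_seq (I : eqType) (r : seq I) (P : pred I) (F : I -> option R) i :
  i \in r -> P i -> mple (F i) (\big[@mpadd R/None]_(j <- r | P j) F j).
Proof.
elim: r => // x r IH; rewrite inE big_cons => /orP [/eqP <-|hi] Pi.
  by rewrite Pi; apply: mple_addl.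
case: ifP => _; last exact: IH.
exact: mple_trans (IH hi Pi) (mple_addr _ _).
Qed.

Lemma mple_big (I : finType) (F : I -> option R) i :
  mple (F i) (\big[@mpadd R/None]_(j : I) F j).
Proof. exact: (mple_big_seq F (mem_index_enum i)). Qed.

Lemma big_mple (I : Type) (r : seq I) (P : pred I) (F : I -> option R) c :
  (forall i, P i -> mple (F i) c) -> mple (\big[@mpadd R/None]_(j <- r | P j) F j) c.
Proof. by move=> h; apply: (big_ind (fun x => mple x c)) => // x y; apply: mpadd_mple. Qed.

Lemma le_big_mpadd (I : Type) (r : seq I) (P : pred I) (F G : I -> option R) :
  (forall i, P i -> mple (F i) (G i)) ->
  mple (\big[@mpadd R/None]_(j <- r | P j) F j) (\big[@mpadd R/None]_(j <- r | P j) G j).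
Proof.
move=> h; elim: r => [|x r IH]; first by rewrite !big_nil.
rewrite !big_cons; case: ifP => // Px; apply: mpadd_mple.
  exact: mple_trans (h x Px) (mple_addl _ _).
exact: mple_trans IH (mple_addr _ _).
Qed.

Lemma big_mpadd_attained (I : eqType) (r : seq I) (P : pred I) (F : I -> option R) :
  \big[@mpadd R/None]_(j <- r | P j) F j != None ->
  exists i, [/\ i \in r, P i & \big[@mpadd R/None]_(j <- r | P j) F j = F i].
Proof.
elim: r => [|x r IH]; first by rewrite big_nil.
rewrite big_cons; case: ifP => Px; last first.
  by move=> /IH [i [h1 h2 h3]]; exists i; rewrite inE h1 orbT.
have [->|->] := mpadd_eq_or (F x) (\big[@mpadd R/None]_(j <- r | P j) F j).
  by move=> _; exists x; rewrite inE eqxx.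
by move=> /IH [i [h1 h2 h3]]; exists i; rewrite inE h1 orbT.
Qed.

Lemma big_mpadd_None (I : Type) (r : seq I) (P : pred I) :
  \big[@mpadd R/None]_(j <- r | P j) (None : option R) = None.
Proof. by apply: (big_ind (fun x : option R => x = None)) => // x y -> ->. Qed.

Lemma mpmul_bigr (I : Type) (r : seq I) (P : pred I) (F : I -> option R) c :
  mpmul c (\big[@mpadd R/None]_(j <- r | P j) F j) =
  \big[@mpadd R/None]_(j <- r | P j) mpmul c (F j).
Proof. by apply: (big_morph (mpmul c)) => [x y|]; [exact: mpmulDr|exact: mpmul0r]. Qed.

Lemma mpmul_bigl (I : Type) (r : seq I) (P : pred I) (F : I -> option R) c :
  mpmul (\big[@mpadd R/None]_(j <- r | P j) F j) c =
  \big[@mpadd R/None]_(j <- r | P j) mpmul (F j) c.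
Proof. by rewrite mpmulC mpmul_bigr; apply: eq_bigr => i _; rewrite mpmulC. Qed.

End MaxPlusScalar.

HB.instance Definition _ (R : realFieldType) :=
  Monoid.isComLaw.Build (option R) None (@mpadd R) (@mpaddA R) (@mpaddC R) (@mpadd0l R).

Section MaxPlusMatrix.
Variable R : realFieldType.

Definition mpmx_finite m n (M : 'M[option R]_(m, n)) := forall i j, M i j != None.

Lemma mpmx_sumE m n (I : Type) (r : seq I) (P : pred I) (F : I -> 'M[option R]_(m, n)) i j :
  (\big[@mpmx_add R m n/@mpzero R m n]_(l <- r | P l) F l) i j =
  \big[@mpadd R/None]_(l <- r | P l) F l i j.
Proof.
by apply: (big_morph (fun M : 'M[option R]_(m, n) => M i j)) => [x y|]; rewrite !mxE.
Qed.

Lemma mpmx_mulA m n p l (A : 'M[option R]_(m, n)) (B : 'M_(n, p)) (C : 'M_(p, l)) :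
  mpmx_mul A (mpmx_mul B C) = mpmx_mul (mpmx_mul A B) C.
Proof.
apply/matrixP => i j; rewrite !mxE.
under eq_bigr do rewrite mxE mpmul_bigr.
under [RHS]eq_bigr do rewrite mxE mpmul_bigl.
rewrite exchange_big; apply: eq_bigr => a _; apply: eq_bigr => b _.
by rewrite mpmulA.
Qed.

Lemma mpmx_mul_scaler m n p c (A : 'M[option R]_(m, n)) (B : 'M_(n, p)) :
  mpmx_mul A (mpmx_scale c B) = mpmx_scale c (mpmx_mul A B).
Proof.
apply/matrixP => i j; rewrite !mxE mpmul_bigr.
by apply: eq_bigr => a _; rewrite mxE mpmulCA.
Qed.

Lemma mpmx_mul_scalel m n p c (A : 'M[option R]_(m, n)) (B : 'M_(n, p)) :
  mpmx_mul (mpmx_scale c A) B = mpmx_scale c (mpmx_mul A B).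
Proof.
apply/matrixP => i j; rewrite !mxE mpmul_bigr.
by apply: eq_bigr => a _; rewrite mxE mpmulA.
Qed.

Lemma mpmx_pinv_scale m n c (A : 'M[option R]_(m, n)) :
  mpmx_pinv (mpmx_scale c A) = mpmx_scale (mpneg c) (mpmx_pinv A).
Proof. by apply/matrixP => i j; rewrite !mxE mpneg_mul. Qed.

Lemma mpmx_finite_mul m n p (A : 'M[option R]_(m, n)) (B : 'M_(n, p)) :
  (0 < n)%N -> mpmx_finite A -> mpmx_finite B -> mpmx_finite (mpmx_mul A B).
Proof.
move=> n_gt0 hA hB i j; rewrite mxE.
apply: (mple_neqNone (mple_big (fun a : 'I_n => mpmul (A i a) (B a j)) (Ordinal n_gt0))).
exact: mpmul_neqNone.
Qed.

Lemma mpmx_finite_pinv m n (A : 'M[option R]_(m, n)) :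
  mpmx_finite A -> mpmx_finite (mpmx_pinv A).
Proof. by move=> hA i j; rewrite mxE; move: (hA j i); case: (A j i). Qed.

Lemma mpmx_finite_scale m n c (A : 'M[option R]_(m, n)) :
  c != None -> mpmx_finite A -> mpmx_finite (mpmx_scale c A).
Proof. by move=> hc hA i j; rewrite mxE; apply: mpmul_neqNone. Qed.

Lemma mplift_finite n (x : 'cV[R]_n) : mpmx_finite (mplift x).
Proof. by move=> i j; rewrite mxE. Qed.

Lemma mplift_odflt n (x : 'cV[option R]_n) :
  mpmx_finite x -> mplift (map_mx (odflt 0) x) = x.
Proof. by move=> hx; apply/matrixP => i j; rewrite !mxE; move: (hx i j); case: (x i j). Qed.

Lemma mpmx_mul_pinvr k (y : 'rV[option R]_k) :
  (0 < k)%N -> mpmx_finite y -> (mpmx_mul y (mpmx_pinv y)) 0 0 = Some 0.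
Proof.
move=> k_gt0 hy; rewrite mxE.
have yy l : mpmul (y 0 l) (mpmx_pinv y l 0) = Some 0.
  by rewrite mxE; move: (hy 0 l); case: (y 0 l) => //= x _; rewrite subrr.
apply: mple_anti; first by apply: big_mple => l _; rewrite yy mple_refl.
by rewrite -(yy (Ordinal k_gt0)); apply: mple_big.
Qed.

End MaxPlusMatrix.

Lemma ord_pigeonhole n (u : nat -> 'I_n) :
  exists a b, [/\ (a < b)%N, (b <= n)%N & u a = u b].
Proof.
pose f (t : 'I_n.+1) := u t.
have /injectivePn [t1 [t2 t12 ft12]] : ~~ injectiveb f.
  by apply/injectiveP => /leq_card; rewrite !card_ord ltnn.
case: (ltngtP t1 t2) => h.
- by exists t1, t2; split => //; rewrite -ltnS.
- by exists t2, t1; split => //; rewrite -ltnS.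
- by move: t12; rewrite (val_inj h) eqxx.
Qed.

Lemma last_take (T : Type) (s : seq T) (i : T) a :
  (a <= size s)%N -> last i (take a s) = nth i (i :: s) a.
Proof.
elim: s i a => [|x s IH] i [|a] //= ha.
by rewrite IH //=; case: a ha => //= a ha; exact: set_nth_default.
Qed.

Section Walks.
Variables (R : realFieldType) (n : nat) (A : 'M[option R]_n).

Fixpoint walk_weight (i : 'I_n) (s : seq 'I_n) : option R :=
  if s is a :: s' then mpmul (A i a) (walk_weight a s') else Some 0.

Lemma walk_weight_cat i s1 s2 :
  walk_weight i (s1 ++ s2) = mpmul (walk_weight i s1) (walk_weight (last i s1) s2).
Proof.
elim: s1 i => [|a s1 IH] i; first by rewrite mpmul1l.
by rewrite /= IH mpmulA.
Qed.

Lemma mpmx_powS l i j :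
  mpmx_pow A l.+1 i j = \big[@mpadd R/None]_(a < n) mpmul (mpmx_pow A l i a) (A a j).
Proof. by rewrite /= mxE. Qed.

Lemma walk_weight_le_pow i s : mple (walk_weight i s) (mpmx_pow A (size s) i (last i s)).
Proof.
elim/last_ind: s => [|s b IH]; first by rewrite /= mxE eqxx /= lexx.
rewrite -cats1 walk_weight_cat last_cat /= size_cat addn1 mpmx_powS mpmul1r.
apply: mple_trans (mple_mul2r _ IH) _.
exact: (mple_big (fun a => mpmul (mpmx_pow A (size s) i a) (A a b)) (last i s)).
Qed.

Lemma pow_walk l i j : mpmx_pow A l i j != None ->
  exists s, [/\ size s = l, last i s = j & walk_weight i s = mpmx_pow A l i j].
Proof.
elim: l j => [|l IH] j.
  by rewrite /= mxE; case: (i =P j) => [<-|] // _; exists [::].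
rewrite mpmx_powS => /[dup] hne /big_mpadd_attained [a [_ _ e]].
move: hne; rewrite e => /mpmul_neqNone_inv [/IH [s [h1 h2 h3]] _].
exists (rcons s j); rewrite size_rcons last_rcons h1; split => //.
by rewrite -cats1 walk_weight_cat h2 h3 /= mpmul1r.
Qed.

Lemma mptimesE i j : mptimes A i j =
  \big[@mpadd R/None]_(a < n) mpmul (A i a) (\big[@mpadd R/None]_(l < n) mpmx_pow A l a j).
Proof. by rewrite mxE; apply: eq_bigr => a _; rewrite mpmx_sumE. Qed.

Lemma walk_weight_le_mptimes_short i s :
  (0 < size s <= n)%N -> mple (walk_weight i s) (mptimes A i (last i s)).
Proof.
case: s => [|a s] //= hs; rewrite mptimesE.
apply: mple_trans (mple_big (fun b =>
  mpmul (A i b) (\big[@mpadd R/None]_(l < n) mpmx_pow A l b (last a s))) a).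
apply/mple_mul2l/(mple_trans (walk_weight_le_pow a s)).
exact: (mple_big (fun l : 'I_n => mpmx_pow A l a (last a s)) (Ordinal hs)).
Qed.

Lemma mptimes_walk i j : mptimes A i j != None ->
  exists s, [/\ (0 < size s <= n)%N, last i s = j & walk_weight i s = mptimes A i j].
Proof.
rewrite mptimesE => /[dup] hne /big_mpadd_attained [a [_ _ e]].
move: hne; rewrite e => /mpmul_neqNone_inv [_ /[dup] hne /big_mpadd_attained [l [_ _ e2]]].
move: hne; rewrite e2 => /pow_walk [s [hs hl hw]].
exists (a :: s); split => //=; last by rewrite hw.
by rewrite hs ltn_ord.
Qed.

End Walks.

Definition mp_critical (R : realFieldType) n (A : 'M[option R]_n) (c : 'I_n) : Prop :=
  mptimes A c c = Some 0.

Section NonpositiveCycles.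
Variables (R : realFieldType) (n : nat) (A : 'M[option R]_n).
Hypothesis hTr : mpTr A = Some 0.

Lemma mptimes_diag_le j : mple (mptimes A j j) (Some 0).
Proof.
case E : (mptimes A j j) => [x|] //.
have /mptimes_walk [s [hs hl hw]] : mptimes A j j != None by rewrite E.
rewrite -E -hw -hTr; apply: mple_trans (walk_weight_le_pow A j s) _; rewrite hl.
apply: mple_trans (mple_big (fun i => mpmx_pow A (size s) i i) j) _.
apply: (mple_big_seq (fun k => mptr (mpmx_pow A k))) => //.
by rewrite mem_index_iota; case/andP: hs => -> /=; rewrite ltnS.
Qed.

(* A walk longer than n repeats a vertex; cutting out the closed subwalk,
   whose weight is at most 1, does not decrease the weight. *)
Lemma walk_weight_le_mptimes s i :
  (0 < size s)%N -> mple (walk_weight A i s) (mptimes A i (last i s)).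
Proof.
have [L] := ubnP (size s); elim: L s i => // L IH s i hL hpos.
case: (leqP (size s) n) => hsn.
  by apply: walk_weight_le_mptimes_short; rewrite hpos hsn.
pose u t := nth i (i :: s) t.
have [a [b [hab hbn hu]]] := ord_pigeonhole u.
have hbs : (b < size s)%N by apply: leq_ltn_trans hsn.
have has : (a <= size s)%N by apply/ltnW/(ltn_trans hab).
set s1 := take a s; set c := take (b - a) (drop a s); set s3 := drop b s.
have s1c : s1 ++ c = take b s by rewrite /s1 /c -takeD subnKC // ltnW.
have es : s = s1 ++ c ++ s3 by rewrite catA s1c cat_take_drop.
have l1 : last i s1 = u a by rewrite last_take.
have l2 : last (u a) c = u a.
  by rewrite -{1}l1 -last_cat s1c last_take ?(ltnW hbs) // hu.
have c_le : mple (walk_weight A (u a) c) (Some 0).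
  apply: mple_trans (mptimes_diag_le (u a)).
  have := @walk_weight_le_mptimes_short _ _ A (u a) c; rewrite l2; apply.
  rewrite /c size_takel; last by rewrite size_drop leq_sub2r // ltnW.
  by rewrite subn_gt0 hab /=; apply: leq_trans (leq_subr _ _) hbn.
have e3 : last i s = last (u a) s3.
  by rewrite es catA last_cat s1c last_take ?(ltnW hbs) // -/(u b) -hu.
apply: mple_trans (_ : mple _ (walk_weight A i (s1 ++ s3))) _.
  rewrite es !walk_weight_cat l1 l2; apply: mple_mul2l.
  by apply: mple_trans (mple_mul2r _ c_le) _; rewrite mpmul1l mple_refl.
rewrite e3 -l1 -last_cat; apply: IH.
- by rewrite size_cat /s1 /s3 size_takel // size_drop; move: hL hab hbs; clear; lia.
- by rewrite size_cat size_drop; move: hbs; clear; lia.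
Qed.

Lemma mptimes_critical_eigen c i : mp_critical A c ->
  \big[@mpadd R/None]_(a < n) mpmul (A i a) (mptimes A a c) = mptimes A i c.
Proof.
move=> hc; apply: mple_anti.
  apply: big_mple => a _.
  case E : (mptimes A a c) => [y|]; last by rewrite mpmul0r.
  have /mptimes_walk [s [hs hl hw]] : mptimes A a c != None by rewrite E.
  by have := @walk_weight_le_mptimes (a :: s) i isT; rewrite /= hl hw E.
case E : (mptimes A i c) => [y|] //.
have /mptimes_walk [[|b s] [hs hl hw]] : mptimes A i c != None by rewrite E.
  by [].
rewrite -E -hw /=.
apply: mple_trans (mple_big (fun a => mpmul (A i a) (mptimes A a c)) b); apply: mple_mul2l.
case: s hs hl {hw} => [|b' s] hs /= hl; first by rewrite hl hc /= lexx.
by have := @walk_weight_le_mptimes (b' :: s) b isT; rewrite /= hl.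
Qed.

Lemma exists_critical : exists c, mp_critical A c.
Proof.
have : mpTr A != None by rewrite hTr.
rewrite /mpTr => /[dup] h /big_mpadd_attained [l [hl _ e]]; move: h; rewrite e.
rewrite /mptr => /[dup] h /big_mpadd_attained [j [_ _ e2]]; move: h; rewrite e2.
move=> /pow_walk [s [hs hsj hw]].
exists j; apply: mple_anti; first exact: mptimes_diag_le.
have w1 : walk_weight A j s = Some 0 by rewrite hw -e2 -hTr /mpTr e.
have := @walk_weight_le_mptimes_short _ _ A j s; rewrite hsj w1; apply.
by move: hl; rewrite hs mem_index_iota ltnS.
Qed.

Section Eigenvectors.
Variable x : 'cV[R]_n.
Hypothesis hx : mp_S0 A x.

Lemma mp_S0E i :
  \big[@mpadd R/None]_(a < n) mpmul (A i a) (Some (x a 0)) = Some (x i 0).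
Proof.
have := congr1 (fun M : 'cV_n => M i 0) hx; rewrite /= !mxE => <-.
by apply: eq_bigr => a _; rewrite mxE.
Qed.

Lemma mp_S0_walk s a :
  mple (mpmul (walk_weight A a s) (Some (x (last a s) 0))) (Some (x a 0)).
Proof.
elim: s a => [|b s IH] a /=; first by rewrite add0r lexx.
rewrite -mpmulA; apply: mple_trans (mple_mul2l _ (IH b)) _.
by rewrite -(mp_S0E a); apply: (mple_big (fun a0 => mpmul (A a a0) (Some (x a0 0))) b).
Qed.

Lemma mp_S0_mptimes_le i c : mple (mpmul (mptimes A i c) (Some (x c 0))) (Some (x i 0)).
Proof.
case E : (mptimes A i c) => [y|] //.
have /mptimes_walk [s [_ hl hw]] : mptimes A i c != None by rewrite E.
by rewrite -E -hw -{1}hl; apply: mp_S0_walk.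
Qed.

Definition tight_succ (a : 'I_n) : 'I_n :=
  odflt a [pick b | mpmul (A a b) (Some (x b 0)) == Some (x a 0)].

Lemma tight_succP a : A a (tight_succ a) = Some (x a 0 - x (tight_succ a) 0).
Proof.
have /big_mpadd_attained [b [_ _ e]] :
  \big[@mpadd R/None]_(b < n) mpmul (A a b) (Some (x b 0)) != None by rewrite mp_S0E.
rewrite /tight_succ; case: pickP => [b' /eqP|/(_ b)]; last by rewrite -e mp_S0E eqxx.
by case: (A a b') => //= y [<-]; rewrite addrK.
Qed.

Fixpoint tight_walk (L : nat) (a : 'I_n) : seq 'I_n :=
  if L is L'.+1 then tight_succ a :: tight_walk L' (tight_succ a) else [::].

Lemma size_tight_walk L a : size (tight_walk L a) = L.
Proof. by elim: L a => //= L IH a; rewrite IH. Qed.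

Lemma last_tight_walk L a : last a (tight_walk L a) = iter L tight_succ a.
Proof. by elim: L a => //= L IH a; rewrite IH -iterSr. Qed.

Lemma walk_weight_tight_walk L a :
  walk_weight A a (tight_walk L a) = Some (x a 0 - x (iter L tight_succ a) 0).
Proof.
elim: L a => [|L IH] a /=; first by rewrite subrr.
by rewrite IH tight_succP /= -iterSr addrA subrK.
Qed.

Lemma mp_S0_critical_attained i :
  exists c, mp_critical A c /\ mpmul (mptimes A i c) (Some (x c 0)) = Some (x i 0).
Proof.
have [a [b [hab hbn hu]]] := ord_pigeonhole (fun t => iter t tight_succ i).
set j := iter a tight_succ i.
have hl : last j (tight_walk (b - a) j) = j.
  by rewrite last_tight_walk /j -iterD subnK // ltnW.
exists j; split.
  apply: mple_anti; first exact: mptimes_diag_le.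
  have := @walk_weight_le_mptimes_short _ _ A j (tight_walk (b - a) j).
  rewrite walk_weight_tight_walk -last_tight_walk hl subrr; apply.
  by rewrite size_tight_walk; move: hab hbn; clear; lia.
apply: mple_anti; first exact: mp_S0_mptimes_le.
have hl2 : last i (tight_walk b i) = j by rewrite last_tight_walk -hu.
have := @walk_weight_le_mptimes_short _ _ A i (tight_walk b i).
rewrite walk_weight_tight_walk -last_tight_walk hl2 size_tight_walk => h.
have {}h := h ltac:(move: hab hbn; clear; lia).
by apply: mple_trans (mple_mul2r (Some (x j 0)) h); rewrite /= subrK lexx.
Qed.

End Eigenvectors.

Lemma mp_irreducible_closed (S : {set 'I_n}) i : mp_irreducible A -> i \in S ->
  (forall a b, a \in S -> A a b != None -> b \in S) -> forall a, a \in S.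
Proof.
move=> hI iS closS a0; apply: contraT => a0S; exfalso; apply: hI.
pose ss := enum (~: S) ++ enum S.
have ss_size : size ss = n by rewrite size_cat -!cardE addnC cardsC card_ord.
have ss_uniq : uniq ss.
  rewrite cat_uniq !enum_uniq /= andbT; apply/hasPn => y.
  by rewrite !mem_enum in_setC negbK.
have ss_inj : injective (fun t : 'I_n => nth i ss t).
  by move=> t1 t2 /eqP; rewrite nth_uniq ?ss_size // => /eqP; apply: val_inj.
have hC := cardsC S; rewrite card_ord in hC.
have S_gt0 : (0 < #|S|)%N by apply/card_gt0P; exists i.
have CS_gt0 : (0 < #|~: S|)%N by apply/card_gt0P; exists a0; rewrite inE.
exists (perm ss_inj), #|~: S|; split.
  by rewrite CS_gt0 /=; move: S_gt0; rewrite -(ltn_add2r #|~: S|) add0n hC.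
move=> t u ht hu; rewrite !permE; apply/eqP; apply: contraT => hne.
have hu' : nth i ss u \in ~: S.
  by rewrite /ss nth_cat -cardE hu -mem_enum; apply: mem_nth; rewrite -cardE.
have ht' : nth i ss t \in S.
  rewrite /ss nth_cat -cardE ltnNge ht /= -mem_enum; apply: mem_nth.
  by rewrite -cardE ltn_subLR // addnC hC.
by move: hu'; rewrite inE (closS _ _ ht' hne).
Qed.

Lemma mptimes_critical_finite c i :
  mp_irreducible A -> mp_critical A c -> mptimes A i c != None.
Proof.
move=> hI hc.
pose S := [set a | (a == i) || (mptimes A i a != None)].
have closS a b : a \in S -> A a b != None -> b \in S.
  rewrite !inE => /orP [/eqP ->|ha] hab; apply/orP; right.
    have := @walk_weight_le_mptimes [:: b] i isT; rewrite /= mpmul1r => h.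
    exact: mple_neqNone h hab.
  have /mptimes_walk [s [_ hl hw]] := ha.
  have := @walk_weight_le_mptimes (rcons s b) i; rewrite size_rcons last_rcons.
  rewrite -cats1 walk_weight_cat hl /= mpmul1r hw => /(_ isT) h.
  exact: mple_neqNone h (mpmul_neqNone ha hab).
have iS : i \in S by rewrite inE eqxx.
have := mp_irreducible_closed hI iS closS c; rewrite inE.
by case/orP => [/eqP <-|//]; rewrite hc.
Qed.

End NonpositiveCycles.

Section Aplus.
Variables (R : realFieldType) (n k : nat) (A : 'M[option R]_n) (B : 'M[option R]_(n, k)).
Hypotheses (hTr : mpTr A = Some 0) (hB : is_Aplus A B).

Lemma is_Aplus_col j : exists2 c, mp_critical A c & forall i, B i j = mptimes A i c.
Proof.
have [f [_ [fcol [_ findep]]]] := hB.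
have Bcol i : B i j = mp_Aplus_pre A i (f j).
  by have := congr1 (fun M : 'cV_n => M i 0) (fcol j); rewrite !mxE.
have crit : mptimes A (f j) (f j) == Some 0.
  apply: contraT => /negbTE crit; case: (findep j).
  exists (fun _ => None); apply/matrixP => i i0.
  rewrite mpmx_sumE !mxE Bcol mxE crit (eq_bigr (fun _ => None)) ?big_mpadd_None //.
  by move=> l _; rewrite !mxE.
by exists (f j) => [|i]; [apply/eqP | rewrite Bcol mxE crit].
Qed.

Lemma is_Aplus_span c : mp_critical A c ->
  exists z : 'cV_k, forall i, mptimes A i c = (mpmx_mul B z) i 0.
Proof.
move=> hc; have [f [_ [_ [fcomb _]]]] := hB; have [z ez] := fcomb c.
exists (\col_l z l) => i.
have := congr1 (fun M : 'cV_n => M i 0) ez.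
rewrite mpmx_sumE [col c _ i 0]mxE [mp_Aplus_pre A i c]mxE hc eqxx => ->.
by rewrite mxE; apply: eq_bigr => l _; rewrite !mxE mpmulC.
Qed.

Lemma is_Aplus_gt0 : (0 < k)%N.
Proof.
have [c hc] := exists_critical hTr; have [z /(_ c)] := is_Aplus_span hc.
rewrite hc mxE => /esym ez.
have /big_mpadd_attained [l _] : \big[@mpadd R/None]_(l < k) mpmul (B c l) (z l 0) != None.
  by rewrite ez.
exact: leq_ltn_trans (leq0n l) (ltn_ord l).
Qed.

Lemma is_Aplus_finite : mp_irreducible A -> mpmx_finite B.
Proof.
by move=> hI i j; have [c hc ->] := is_Aplus_col j; apply: mptimes_critical_finite.
Qed.

Lemma is_Aplus_eigen : mpmx_mul A B = B.
Proof.
apply/matrixP => i j; rewrite mxE; have [c hc Bc] := is_Aplus_col j.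
by under eq_bigr do rewrite Bc; rewrite Bc mptimes_critical_eigen.
Qed.

Lemma mp_S0_local_span x : mp_S0 A x -> forall i, exists z : 'cV_k,
  (forall i', mple ((mpmx_mul B z) i' 0) (Some (x i' 0))) /\
  (mpmx_mul B z) i 0 = Some (x i 0).
Proof.
move=> hx i; have [c [hc hci]] := mp_S0_critical_attained hTr hx i.
have [z hz] := is_Aplus_span hc.
exists (mpmx_scale (Some (x c 0)) z); rewrite mpmx_mul_scaler.
by split => [i'|]; rewrite mxE -hz mpmulC; [apply: mp_S0_mptimes_le | apply: hci].
Qed.

End Aplus.

Section Optimum.
Variables (R : realFieldType) (m n k : nat) (r : 'I_m -> 'cV[R]_n) (w : 'I_m -> R).

Lemma mp_qm_finite : (0 < m)%N -> mpmx_finite (mp_qm r w).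
Proof.
move=> m_gt0 i j; rewrite mpmx_sumE.
apply: (mple_neqNone (mple_big _ (Ordinal m_gt0))).
by rewrite !mxE.
Qed.

Lemma mp_p_finite : (0 < m)%N -> mpmx_finite (mp_p r w).
Proof.
move=> m_gt0 i j; rewrite mpmx_sumE.
apply: (mple_neqNone (mple_big _ (Ordinal m_gt0))).
by rewrite !mxE.
Qed.

(* If t B_l <= x, then t (q^- B)_l <= q^- x, so t <= (q^- x)(q^- B)_l^-1. *)
Lemma mpmx_span_le (q : 'rV[option R]_n) (B : 'M_(n, k)) (z : 'cV_k) (x : 'cV_n) :
  mpmx_finite (mpmx_mul q B) ->
  (forall i, mple ((mpmx_mul B z) i 0) (x i 0)) ->
  forall i, mple ((mpmx_mul B z) i 0)
    (mpmul ((mpmx_mul q x) 0 0) ((mpmx_mul B (mpmx_pinv (mpmx_mul q B))) i 0)).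
Proof.
move=> qBfin Bz_le i.
have z_le l : mple (z l 0) (mpmul ((mpmx_mul q x) 0 0) (mpneg ((mpmx_mul q B) 0 l))).
  apply: mple_mul_mpneg (qBfin 0 l) _; rewrite !mxE mpmul_bigr.
  apply: le_big_mpadd => a _; rewrite mpmulCA; apply/mple_mul2l/(mple_trans _ (Bz_le a)).
  by rewrite mxE mpmulC; apply: (mple_big (fun b => mpmul (B a b) (z b 0)) l).
rewrite [X in mple X _]mxE [X in mpmul _ X]mxE mpmul_bigr.
by apply: le_big_mpadd => l _; rewrite [mpmx_pinv _ l 0]mxE mpmulCA; apply: mple_mul2l.
Qed.

Variable B : 'M[option R]_(n, k).

Lemma mp_phi_Delta_v : (0 < k)%N -> mpmx_finite (mpmx_mul (mp_qm r w) B) ->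
  mp_phi r w (mpmx_scale (mp_Delta r w B) (mp_v r w B)) = mp_Delta r w B.
Proof.
move=> k_gt0 qBfin; rewrite /mp_phi /mp_Delta.
set D := (mpmx_mul (mpmx_pinv (mp_v r w B)) (mp_p r w)) 0 0.
rewrite mpmx_pinv_scale mpmx_mul_scalel mpmx_mul_scaler {2}/mp_v mpmx_mulA.
rewrite mxE [mpmx_scale _ _ 0 0]mxE [mpmx_scale _ _ 0 0]mxE -/D.
by rewrite mpmx_mul_pinvr // mpmul1r mpadd_mpsqrt.
Qed.

Lemma mp_Delta_le_phi (x : 'cV[option R]_n) :
  mpmx_finite x -> (mpmx_mul (mp_qm r w) x) 0 0 != None ->
  (forall i, mple (x i 0) (mpmul ((mpmx_mul (mp_qm r w) x) 0 0) (mp_v r w B i 0))) ->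
  mple (mp_Delta r w B) (mp_phi r w x).
Proof.
set mu := (mpmx_mul (mp_qm r w) x) 0 0 => xfin mu_fin x_le.
rewrite /mp_phi mxE -/mu; apply: mple_trans (mpsqrt_le_mpadd _ mu_fin) _.
apply: mple_add2r; rewrite [X in mpmul _ X]mxE [X in mple _ X]mxE mpmul_bigr.
apply: le_big_mpadd => i _; rewrite [mpmx_pinv (mp_v _ _ _) _ _]mxE [mpmx_pinv x _ _]mxE.
rewrite mpmulA -mpneg_mul; apply: mple_mul2r.
exact: mple_mpneg (xfin i 0) (x_le i).
Qed.

End Optimum.

Theorem theorem6 (R : realFieldType) (m n k : nat)
  (r : 'I_m -> 'cV[R]_n) (w : 'I_m -> R)
  (A : 'M[option R]_n) (Aplus : 'M[option R]_(n, k)) :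
  (0 < m)%N ->
  mp_irreducible A ->
  mpTr A = Some 0 ->
  is_Aplus A Aplus ->
  (exists x0 : 'cV[R]_n,
      mp_S0 A x0 /\
      mplift x0 = mpmx_scale (mp_Delta r w Aplus) (mp_v r w Aplus) /\
      mp_phi r w (mplift x0) = mp_Delta r w Aplus) /\
  (forall x : 'cV[R]_n, mp_S0 A x -> mple (mp_Delta r w Aplus) (mp_phi r w (mplift x))).
Proof.
move=> m_gt0 hI hTr hB.
have [c0 _] := exists_critical hTr.
have n_gt0 : (0 < n)%N := leq_ltn_trans (leq0n c0) (ltn_ord c0).
have k_gt0 := is_Aplus_gt0 hTr hB.
have qfin := mp_qm_finite r w m_gt0.
have qBfin := mpmx_finite_mul n_gt0 qfin (is_Aplus_finite hTr hB hI).
have vfin := mpmx_finite_mul k_gt0 (is_Aplus_finite hTr hB hI) (mpmx_finite_pinv qBfin).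
have Dfin := mpmx_finite_mul n_gt0 (mpmx_finite_pinv vfin) (mp_p_finite r w m_gt0) 0 0.
have Deltafin : mp_Delta r w Aplus != None by move: Dfin; rewrite /mp_Delta; case: (_ 0 0).
split.
  exists (map_mx (odflt 0) (mpmx_scale (mp_Delta r w Aplus) (mp_v r w Aplus))).
  rewrite /mp_S0 mplift_odflt; last exact: mpmx_finite_scale.
  split; last by split => //; apply: mp_phi_Delta_v.
  by rewrite /mp_v mpmx_mul_scaler mpmx_mulA (is_Aplus_eigen hTr hB).
move=> x hx; apply: mp_Delta_le_phi (mplift_finite x) _ _.
  exact: mpmx_finite_mul n_gt0 qfin (mplift_finite x) 0 0.
move=> i; have [z [z_le zi]] := mp_S0_local_span hTr hB hx i.
have Bz_le i' : mple ((mpmx_mul Aplus z) i' 0) (mplift x i' 0).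
  by rewrite [mplift x i' 0]mxE; apply: z_le.
by rewrite mxE -zi; apply: (mpmx_span_le qBfin Bz_le).
Qed.
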